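(* Let $n$ be a positive integer with $\lambda^{3n/2}>2(1+\sqrt2)C_1$. Then $c_n>0$ and $$\big|\lambda^{n/2}-\sqrt{3\theta^2-p}\cdot c_n^{1/2}\big|<\frac{\sqrt2 C_1}{\lambda^n}.$$
   Context: Standing setup: $p,q\in\mathbb{Z}$ are such that $x^3-px-q$ is irreducible over $\mathbb{Q}$ with exactly one real root $\theta$ (one has $3\theta^2-4p>0$ and $3\theta^2-p>0$). $K=\mathbb{Q}(\theta)\subset\mathbb{R}$, $\mathcal{O}_K$ its ring of integers. $d$ is a positive integer with $\mathcal{O}_K\subseteq\frac1d\mathbb{Z}[\theta]$. $\lambda\in\mathcal{O}_K$ is a unit with $\lambda>1$. For $n\ge1$ the rationals $a_n,b_n,c_n$ are defined by $a_n+b_n\theta+c_n\theta^2=\lambda^n$, and $X_n=a_n+pc_n-b_n\theta$, $Y_n=a_n+pc_n-c_n\theta^2$, $Z_n=b_n\theta-c_n\theta^2$, $k_n=dc_n$. Constants: $C_1=\max\{\sqrt2,\ \frac{\sqrt2|\theta|}{\sqrt{3\theta^2-4p}}\}$, $C_2=\frac{\sqrt d}{\sqrt{3\theta^2-p}}$. *)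

From HB Require Import structures.
From mathcomp Require Import all_boot all_order all_algebra.
Set Implicit Arguments. Unset Strict Implicit. Unset Printing Implicit Defensive.
Import Order.TTheory GRing.Theory Num.Theory.
Local Open Scope ring_scope.

Definition alg_integer (R : numFieldType) (x : R) : Prop :=
  exists P : {poly int}, P \is monic /\ root (map_poly intr P) x.

Definition Kelt (R : numFieldType) (theta : R) (a b c : rat) : R :=
  ratr a + ratr b * theta + ratr c * theta ^+ 2.

Definition cubic (p q : int) : {poly rat} :=
  'X^3 - (p%:~R) *: 'X - (q%:~R)%:P.

Definition C1 (R : rcfType) (p : int) (theta : R) : R :=
  Num.max (Num.sqrt 2)
    (Num.sqrt 2 * `|theta| / Num.sqrt (3 * theta ^+ 2 - 4 * p%:~R)).

From HB Require Import structures.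
From mathcomp Require Import all_boot all_order all_algebra.
From mathcomp Require Import ring lra zify.
Set Implicit Arguments. Unset Strict Implicit. Unset Printing Implicit Defensive.
Import Order.TTheory GRing.Theory Num.Theory.
Local Open Scope ring_scope.

(* Represent x = a + b theta + c theta^2 by its rational coordinates (a, b, c) and let sigma be
   a complex embedding of K; |sigma x|^2 is an explicit sum of squares, positive for x <> 0.
   The norm x |sigma x|^2 of a unit lambda > 1 is a positive rational integer whose
   inverse is an integer too, so it is 1 and |sigma(lambda^n)|^2 = lambda^-n.  An algebraic
   identity gives (3 theta^2 - 4p) ((3 theta^2 - p) c - x)^2 <= 4 (3 theta^2 - p) |sigma x|^2,
   so (3 theta^2 - p) c_n = lambda^n + O(lambda^(-n/2)), and taking square roots gives the
   claim.  That norms of algebraic integers of K are integers is obtained elementarily: the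
   coordinates of all powers of such an element have a common denominator. *)

Lemma common_denominator (s : seq rat) :
  exists2 D : nat, (0 < D)%N & {in s, forall x, D%:R * x \is a Num.int}.
Proof.
elim: s => [|x s [D D_gt0 Ds]]; first by exists 1%N.
have denx_gt0 : (0 < `|denq x|)%N by rewrite absz_gt0 gt_eqF ?denq_gt0.
exists (D * `|denq x|)%N; first by rewrite muln_gt0 D_gt0.
move=> y; rewrite inE => /predU1P [->|ys].
  rewrite natrM natr_absz gtr0_norm ?denq_gt0 // -mulrA [_ * x]mulrC -numqE.
  by rewrite rpredM ?natr_int ?intr_int.
by rewrite natrM mulrAC rpredM ?natr_int ?Ds.
Qed.

(* den(r)^k divides D for every k, which forces den(r) = 1. *)
Lemma int_of_bounded_den (r : rat) (D : nat) : (0 < D)%N ->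
  (forall k, D%:R * r ^+ k \is a Num.int) -> r \is a Num.int.
Proof.
move=> D_gt0 Drk; rewrite Qint_def.
have den_dvd k : (`|denq r| ^ k %| D)%N.
  have /intrP [m Dm] := Drk k.
  have : (D%:Z * numq r ^+ k = m * denq r ^+ k)%R.
    apply: (@intr_inj rat); rewrite !rmorphM !rmorphXn /= numqE -Dm.
    by rewrite exprMn mulrA.
  move=> /(congr1 absz); rewrite !abszM !abszX /= => Dk.
  have : (`|denq r| ^ k %| D * `|numq r| ^ k)%N by rewrite Dk dvdn_mull.
  rewrite Gauss_dvdl //; apply: coprimeXl; apply: coprimeXr.
  by rewrite coprime_sym coprime_num_den.
have := dvdn_leq D_gt0 (den_dvd D).
have den_gt0 : (0 < denq r)%R by exact: denq_gt0.
case: (denq r) den_gt0 => // [[|[|n]]] // _.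
by rewrite /= leqNgt ltn_expl.
Qed.

Lemma alg_integer_pow_span (R : numFieldType) (x : R) : alg_integer x ->
  exists m, forall k, exists r : nat -> int, x ^+ k = \sum_(j < m) (r j)%:~R * x ^+ j.
Proof.
move=> [P [P_monic Px]]; exists (size P) => k.
set r := 'X^k %% P; exists (fun j => r`_j).
have := congr1 (fun Q : {poly int} => (map_poly intr Q).[x])
  (Pdiv.IdomainMonic.divp_eq P_monic 'X^k).
rewrite /= map_polyXn hornerXn rmorphD rmorphM /= hornerD hornerM.
move/rootP: Px => ->; rewrite mulr0 add0r => ->.
have size_mod : (size (map_poly (intr : int -> R) r) <= size P)%N.
  rewrite size_map_inj_poly; [|exact: intr_inj|exact: rmorph0].
  by rewrite ltnW // ltn_modp monic_neq0.
by rewrite (horner_coef_wide _ size_mod); apply: eq_bigr => j _; rewrite coef_map.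
Qed.

Lemma unit_int_gt0_eq1 (x : rat) : 0 < x -> x \is a Num.int -> x^-1 \is a Num.int -> x = 1.
Proof.
move=> x_gt0 /intrP [m xm] /intrP [m' xm'].
have mm' : m * m' = 1.
  by apply: (@intr_inj rat); rewrite rmorphM /= -xm -xm' mulfV ?gt_eqF.
have m_gt0 : 0 < m by rewrite -(ltr0z rat) -xm.
have m'_gt0 : 0 < m' by nia.
by rewrite xm (_ : m = 1) //; nia.
Qed.

Section SqrtApprox.
Variable R : rcfType.
Local Notation s := (Num.sqrt (2 : R)).

Let sqr_sqrt2 : s ^+ 2 = 2. Proof. by rewrite sqr_sqrtr. Qed.
Let sqrt2_gt1 : 1 < s.
Proof. by have s_ge0 : 0 <= s := sqrtr_ge0 2; have := sqr_sqrt2; nra. Qed.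

Lemma deviation_lt_half (L C e : R) : 0 < L -> 0 <= C ->
  e ^+ 2 * L ^+ 2 <= 5 * C ^+ 2 -> 2 * (1 + s) * C < L ^+ 3 -> 2 * `|e| < L ^+ 2.
Proof.
move=> L_gt0 C_ge0 eL CL.
have s_gt1 := sqrt2_gt1.
have C_lt : 20 * C ^+ 2 < (L ^+ 3) ^+ 2.
  have sqrCE : (2 * (1 + s) * C) ^+ 2 = (12 + 8 * s) * C ^+ 2.
    transitivity ((4 + 8 * s + 4 * s ^+ 2) * C ^+ 2); first by ring.
    by rewrite sqr_sqrt2; ring.
  have lhs_ge0 : 0 <= 2 * (1 + s) * C by rewrite !mulr_ge0 //; lra.
  have : (2 * (1 + s) * C) ^+ 2 < (L ^+ 3) ^+ 2.
    by rewrite (ltrXn2r 2 lhs_ge0 CL).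
  have : 20 * C ^+ 2 <= (12 + 8 * s) * C ^+ 2 by rewrite ler_wpM2r ?sqr_ge0 //; lra.
  by rewrite sqrCE; lra.
have L2_gt0 : 0 < L ^+ 2 by exact: exprn_gt0.
have e4 : 4 * e ^+ 2 < (L ^+ 2) ^+ 2.
  rewrite -(ltr_pM2r L2_gt0) (_ : _ ^+ 2 * _ = (L ^+ 3) ^+ 2); last by ring.
  lra.
have : (2 * `|e|) ^+ 2 < (L ^+ 2) ^+ 2 by rewrite exprMn real_normK ?num_real //; lra.
by rewrite ltr_pXn2r // ?nnegrE ?mulr_ge0 ?normr_ge0 // ltW.
Qed.

Lemma sqrt_deviation (L S C e : R) : 0 < L -> 0 <= S -> 0 < C ->
  S ^+ 2 = L ^+ 2 + e -> 2 * `|e| < L ^+ 2 -> e ^+ 2 * L ^+ 2 <= 5 * C ^+ 2 ->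
  `|L - S| < s * C / L ^+ 2.
Proof.
move=> L_gt0 S_ge0 C_gt0 SE e_small eL.
have L2_gt0 : 0 < L ^+ 2 by exact: exprn_gt0.
have S2 : L ^+ 2 < 2 * S ^+ 2 by have := ler_norm (- e); rewrite normrN SE; lra.
have S_big : 6 * L < 10 * S by nra.
have LS_gt0 : 0 < L + S by lra.
have eLS : `|L - S| * (L + S) = `|e|.
  by rewrite -(gtr0_norm LS_gt0) -normrM (_ : e = - ((L - S) * (L + S))) ?normrN //; lra.
rewrite ltr_pdivlMr // -(ltr_pM2r LS_gt0) mulrAC eLS.
have rhs_ge0 : 0 <= s * C * (L + S) by rewrite !mulr_ge0 ?sqrtr_ge0 ?ltW.
have lhs_ge0 : 0 <= `|e| * L ^+ 2 by rewrite mulr_ge0 ?normr_ge0 ?exprn_ge0 ?ltW.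
suff : (`|e| * L ^+ 2) ^+ 2 < (s * C * (L + S)) ^+ 2 by rewrite ltr_pXn2r.
rewrite !exprMn real_normK ?num_real // sqr_sqrt2.
have : e ^+ 2 * (L ^+ 2) ^+ 2 <= 5 * C ^+ 2 * L ^+ 2.
  by rewrite (_ : _ * _ ^+ 2 = e ^+ 2 * L ^+ 2 * L ^+ 2) ?ler_pM2r //; ring.
have : C ^+ 2 * (5 * L ^+ 2) < C ^+ 2 * (2 * (L + S) ^+ 2).
  by rewrite ltr_pM2l ?exprn_gt0 //; nra.
lra.
Qed.

End SqrtApprox.

Definition coords := (rat * rat * rat)%type.

Definition int_coords (u : coords) : bool :=
  [&& u.1.1 \is a Num.int, u.1.2 \is a Num.int & u.2 \is a Num.int].

Definition kpoly (u : coords) : {poly rat} := u.1.1%:P + u.1.2 *: 'X + u.2 *: 'X^2.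

Section Coordinates.
Variables p q : int.
Local Notation P := (p%:~R : rat).
Local Notation Q := (q%:~R : rat).

Definition kmul (u v : coords) : coords :=
  let: (a, b, c) := u in let: (a', b', c') := v in
  (a * a' + Q * (b * c' + c * b'),
   a * b' + b * a' + P * (b * c' + c * b') + Q * c * c',
   a * c' + b * b' + c * a' + P * c * c').

Definition kpow (u : coords) (k : nat) : coords := iter k (kmul u) (1, 0, 0).

(* The resultant of x^3 - p x - q and a + b x + c x^2, i.e. the norm of a + b theta + c theta^2. *)
Definition knorm (u : coords) : rat :=
  let: (a, b, c) := u in
  c^+3*Q^+2 - b*c^+2*P*Q + b^+3*Q + a*c^+2*P^+2 - 3*a*b*c*Q - a*b^+2*P
  + 2*a^+2*c*P + a^+3.

(* The product of the two conjugates of u other than u itself. *)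
Definition kadj (u : coords) : coords :=
  let: (a, b, c) := u in
  (c^+2*P^+2 - b*c*Q - b^+2*P + 2*a*c*P + a^+2, c^+2*Q - a*b, - c^+2*P + b^+2 - a*c).

Definition kscale (s : rat) (u : coords) : coords := (s * u.1.1, s * u.1.2, s * u.2).

Definition kinv (u : coords) : coords := kscale (knorm u)^-1 (kadj u).

Lemma kmul_adj u : kmul u (kadj u) = (knorm u, 0, 0).
Proof. by case: u => [[a b] c]; rewrite /=; congr (_, _, _); ring. Qed.

Lemma knorm_mul u v : knorm (kmul u v) = knorm u * knorm v.
Proof. by case: u => [[a b] c]; case: v => [[a' b'] c']; rewrite /=; ring. Qed.

Lemma knorm_pow u k : knorm (kpow u k) = knorm u ^+ k.
Proof.
elim: k => [|k IHk]; first by rewrite /=; ring.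
by rewrite /kpow iterS -/(kpow u k) knorm_mul IHk exprS.
Qed.

Lemma knorm_adj u : knorm (kadj u) = knorm u ^+ 2.
Proof. by case: u => [[a b] c]; rewrite /=; ring. Qed.

Lemma knorm_scale s u : knorm (kscale s u) = s ^+ 3 * knorm u.
Proof. by case: u => [[a b] c]; rewrite /=; ring. Qed.

Lemma knorm_kinv u : knorm (kinv u) = (knorm u)^-1.
Proof.
rewrite knorm_scale knorm_adj exprVn.
have [->|N_neq0] := eqVneq (knorm u) 0; first by rewrite invr0 mul0r.
by rewrite exprSr invfM mulrAC mulVf ?mul1r // expf_neq0.
Qed.

Lemma knorm_int_coords u : int_coords u -> knorm u \is a Num.int.
Proof.
have [Pint Qint] : P \is a Num.int /\ Q \is a Num.int by rewrite !intr_int.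
case: u => [[a b] c] /and3P /= [a_int b_int c_int].
by rewrite ?(rpredD, rpredB, rpredM, rpredX, rpredN, natr_int).
Qed.

End Coordinates.

Lemma size_kpoly u : (size (kpoly u) <= 3)%N.
Proof.
rewrite /kpoly; apply: (leq_trans (size_polyD _ _)); rewrite geq_max.
rewrite (leq_trans (size_scale_leq _ _)) ?size_polyXn ?andbT //.
apply: (leq_trans (size_polyD _ _)); rewrite geq_max size_polyC.
by rewrite (leq_trans (leq_b1 _)) // (leq_trans (size_scale_leq _ _)) ?size_polyX.
Qed.

Lemma kpoly_eq0 u : kpoly u = 0 -> u = (0, 0, 0).
Proof.
case: u => [[a b] c] /= k0.
have coef_k i := congr1 (fun P : {poly rat} => P`_i) k0.
move: (coef_k 0%N) (coef_k 1%N) (coef_k 2%N).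
rewrite /kpoly /= !coefD !coefZ !coefC !coefX !coefXn /= ?coef0 /=.
by rewrite !mulr0 !mulr1 !addr0 !add0r => -> -> ->.
Qed.

Lemma size_cubic p q : size (cubic p q) = 4%N.
Proof.
rewrite /cubic -addrA size_polyDl size_polyXn // -opprD size_polyN.
apply: (leq_ltn_trans (size_polyD _ _)); rewrite gtn_max size_polyC.
by rewrite (leq_ltn_trans (size_scale_leq _ _)) ?size_polyX //; case: (_ != 0).
Qed.

Section Embedding.
Variables (R : rcfType) (p q : int) (t : R).

Definition kval (u : coords) : R := Kelt t u.1.1 u.1.2 u.2.

(* |sigma(u)|^2 for a complex embedding sigma, as a sum of squares: Re sigma(t) = -t/2 and
   (Im sigma(t))^2 = (3 t^2 - 4 p)/4. *)
Definition conjnorm (u : coords) : R :=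
  let: (a0, b0, c0) := u in
  let a := ratr a0 in let b := ratr b0 in let c := ratr c0 in
  (a - b * t / 2 + c * (p%:~R - t ^+ 2 / 2)) ^+ 2
  + (3 * t ^+ 2 - 4 * p%:~R) / 4 * (b - c * t) ^+ 2.

Lemma kval_const a : kval (a, 0, 0) = ratr a.
Proof. by rewrite /kval /Kelt /= !rmorph0 !mul0r !addr0. Qed.

Lemma kvalB a b c a' b' c' :
  kval (a - a', b - b', c - c') = kval (a, b, c) - kval (a', b', c').
Proof. by rewrite /kval /Kelt /= !rmorphB; ring. Qed.

Lemma kvalZ s u : kval (kscale s u) = ratr s * kval u.
Proof. by rewrite /kval /Kelt /= !rmorphM; ring. Qed.

Lemma kval_lincomb m (r : nat -> int) (f : nat -> coords) :
  kval (\sum_(j < m) (r j)%:~R * (f j).1.1, \sum_(j < m) (r j)%:~R * (f j).1.2,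
        \sum_(j < m) (r j)%:~R * (f j).2)
  = \sum_(j < m) (r j)%:~R * kval (f j).
Proof.
rewrite /kval /Kelt /= !rmorph_sum /= !mulr_suml -!big_split /=.
by apply: eq_bigr => j _; rewrite !rmorphM /= !ratr_int; ring.
Qed.

Lemma horner_kpoly u : (map_poly ratr (kpoly u)).[t] = kval u.
Proof.
rewrite /kpoly !rmorphD /= !map_polyZ map_polyX map_polyXn map_polyC /=.
by rewrite !(hornerD, hornerZ, hornerX, hornerXn, hornerC).
Qed.

Lemma horner_cubic : (map_poly ratr (cubic p q)).[t] = t ^+ 3 - p%:~R * t - q%:~R.
Proof.
rewrite /cubic !rmorphB /= map_polyXn map_polyZ map_polyX map_polyC /=.
by rewrite !hornerE !ratr_int.
Qed.

Hypothesis t_root : t ^+ 3 - p%:~R * t - q%:~R = 0.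

Lemma eq_mod_cubic (x y k : R) : x - y = (t ^+ 3 - p%:~R * t - q%:~R) * k -> x = y.
Proof. by rewrite t_root mul0r => /eqP; rewrite subr_eq0 => /eqP. Qed.

Lemma kval_mul u v : kval (kmul p q u v) = kval u * kval v.
Proof.
case: u => [[a b] c]; case: v => [[a' b'] c'].
apply: (eq_mod_cubic
  (k := - (ratr b * ratr c' + ratr c * ratr b' + ratr c * ratr c' * t))).
by rewrite /kval /Kelt /= !rmorphD !rmorphM /= !ratr_int; ring.
Qed.

Lemma kval_pow u k : kval (kpow p q u k) = kval u ^+ k.
Proof.
elim: k => [|k IHk]; first by rewrite /= kval_const rmorph1.
by rewrite /kpow iterS -/(kpow p q u k) kval_mul IHk exprS.
Qed.

Lemma kval_adj u : kval (kadj p q u) = conjnorm u.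
Proof.
case: u => [[a b] c].
apply: (eq_mod_cubic (k := - ratr c ^+ 2 * t + ratr b * ratr c)).
by rewrite /kval /Kelt /=; field.
Qed.

Lemma knorm_kval u : ratr (knorm p q u) = kval u * conjnorm u.
Proof. by rewrite -kval_adj -kval_mul kmul_adj kval_const. Qed.

Lemma conjnorm_knorm1 u : knorm p q u = 1 -> conjnorm u = (kval u)^-1.
Proof. by move=> N1; apply/esym/mulr1_eq; rewrite -knorm_kval N1 rmorph1. Qed.

Hypothesis cubic_irr : irreducible_poly (cubic p q).

Lemma cubic_dvd_of_root (F : {poly rat}) : (map_poly ratr F).[t] = 0 -> cubic p q %| F.
Proof.
move=> Ft0; apply: contraT => ndvd.
have := irreducible_poly_coprime F cubic_irr; rewrite (negbTE ndvd).
move=> /Bezout_coprimepP [[u v] /= uv].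
have /size_poly1P [k k0 uvE] : size (u * cubic p q + v * F) == 1%N.
  by rewrite (eqp_size uv) size_poly1.
have := congr1 (fun P => (map_poly (ratr : rat -> R) P).[t]) uvE => /=.
rewrite rmorphD !rmorphM /= !hornerE horner_cubic t_root Ft0 map_polyC hornerC.
by move=> /esym /eqP; rewrite !mulr0 addr0 fmorph_eq0 (negbTE k0).
Qed.

Lemma kval_eq0 u : kval u = 0 -> u = (0, 0, 0).
Proof.
rewrite -horner_kpoly => /cubic_dvd_of_root dvd_k; apply: kpoly_eq0.
apply: contraTeq dvd_k => k_neq0; apply/negP => /(dvdp_leq k_neq0).
by rewrite size_cubic leqNgt ltnS size_kpoly.
Qed.

Lemma kval_inj : injective kval.
Proof.
case=> [[a b] c] [[a' b'] c'] uv.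
have := kvalB a b c a' b' c'; rewrite uv subrr => /kval_eq0 [].
by move=> /subr0_eq -> /subr0_eq -> /subr0_eq ->.
Qed.

Lemma disc_gt0 : (forall x : R, x ^+ 3 - p%:~R * x - q%:~R = 0 -> x = t) ->
  0 < 3 * t ^+ 2 - 4 * p%:~R.
Proof.
move=> t_uniq; rewrite ltNge; apply/negP => disc_le0.
(* Otherwise the other two roots (- t +- s) / 2 would be real, hence both equal to t, forcing
   t = 0, which contradicts irreducibility. *)
set s := Num.sqrt (4 * p%:~R - 3 * t ^+ 2).
have s2 : s ^+ 2 = 4 * p%:~R - 3 * t ^+ 2 by rewrite sqr_sqrtr //; lra.
have quad_root (r : R) : r ^+ 2 + t * r + t ^+ 2 - p%:~R = 0 -> r = t.
  move=> r_quad; apply: t_uniq.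
  have -> : r ^+ 3 - p%:~R * r - q%:~R =
    (r - t) * (r ^+ 2 + t * r + t ^+ 2 - p%:~R) + (t ^+ 3 - p%:~R * t - q%:~R) by ring.
  by rewrite r_quad t_root mulr0 addr0.
have other_root (e : R) : e ^+ 2 = 1 -> (- t + e * s) / 2 = t.
  move=> e2; apply: quad_root.
  have -> : ((- t + e * s) / 2) ^+ 2 + t * ((- t + e * s) / 2) + t ^+ 2 - p%:~R =
    (e ^+ 2 * s ^+ 2 - (4 * p%:~R - 3 * t ^+ 2)) / 4 by field.
  by rewrite e2 mul1r s2 subrr mul0r.
have root_plus := other_root 1 (expr1n _ _).
have := other_root (-1); rewrite sqrrN expr1n => /(_ erefl) root_minus.
have t0 : t = 0 by lra.
have : kval (0, 1, 0) = 0 by rewrite /kval /Kelt t0 /= rmorph0 rmorph1; ring.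
by move=> /kval_eq0 [/eqP]; rewrite oner_eq0.
Qed.

Lemma conjnorm_gt0 u : 0 < 3 * t ^+ 2 - 4 * p%:~R -> kval u != 0 -> 0 < conjnorm u.
Proof.
case: u => [[a b] c] disc_gt0; apply: contraNT; rewrite -leNgt /conjnorm.
set X := (ratr a - _ + _); set Y := ratr b - ratr c * t => conj_le0.
have [X2_ge0 Y2_ge0] := (sqr_ge0 X, sqr_ge0 Y).
have Y0 : Y = 0.
  apply/eqP; rewrite -sqrf_eq0 eq_le Y2_ge0 andbT.
  have disc4_gt0 : 0 < (3 * t ^+ 2 - 4 * p%:~R) / 4 by rewrite divr_gt0.
  by rewrite -(pmulr_rle0 _ disc4_gt0); lra.
have kvalY : kval (b, - c, 0) = Y by rewrite /kval /Kelt /Y /= rmorphN rmorph0; ring.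
have [b0 c0] : b = 0 /\ c = 0.
  by case: (kval_eq0 (etrans kvalY Y0)) => -> /eqP; rewrite oppr_eq0 => /eqP.
have X0 : X = 0.
  by apply/eqP; rewrite -sqrf_eq0 eq_le X2_ge0 andbT; move: conj_le0; rewrite Y0; lra.
by apply/eqP; move: X0; rewrite /X /kval /Kelt /= b0 c0 rmorph0 !mul0r !subr0 !addr0.
Qed.

Lemma knorm_gt0 u : 0 < 3 * t ^+ 2 - 4 * p%:~R -> 0 < kval u -> 0 < knorm p q u.
Proof.
move=> disc_gt0 ku_gt0; rewrite -(ltr0q R) knorm_kval mulr_gt0 //.
by rewrite conjnorm_gt0 // gt_eqF.
Qed.

Lemma kval_kinv u : knorm p q u != 0 -> kval (kinv p q u) = (kval u)^-1.
Proof.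
move=> N_neq0; have : kval u * conjnorm u != 0 by rewrite -knorm_kval fmorph_eq0.
rewrite mulf_eq0 negb_or => /andP [ku_neq0 _].
apply: (mulfI ku_neq0); rewrite kvalZ kval_adj mulrCA -knorm_kval -rmorphM.
by rewrite mulVf // rmorph1 mulfV.
Qed.

Lemma kpow_den_bounded u : alg_integer (kval u) ->
  exists2 D : nat, (0 < D)%N & forall k, int_coords (kscale D%:R (kpow p q u k)).
Proof.
move=> /alg_integer_pow_span [m span].
set pows := [seq kpow p q u j | j <- iota 0 m].
have [D D_gt0 Dden] := common_denominator
  ([seq v.1.1 | v <- pows] ++ [seq v.1.2 | v <- pows] ++ [seq v.2 | v <- pows]).
have Dpow j : (j < m)%N -> int_coords (kscale D%:R (kpow p q u j)).
  move=> jm; have pj : kpow p q u j \in pows by apply: map_f; rewrite mem_iota.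
  by apply/and3P; split; apply: Dden; rewrite !mem_cat (map_f _ pj) ?orbT.
exists D => // k; have [r powk] := span k.
have -> : kpow p q u k =
    (\sum_(j < m) (r j)%:~R * (kpow p q u j).1.1, \sum_(j < m) (r j)%:~R * (kpow p q u j).1.2,
     \sum_(j < m) (r j)%:~R * (kpow p q u j).2).
  apply: kval_inj; rewrite kval_lincomb kval_pow powk.
  by apply: eq_bigr => j _; rewrite kval_pow.
have Dcomb (f : nat -> rat) : (forall j, (j < m)%N -> D%:R * f j \is a Num.int) ->
    D%:R * \sum_(j < m) (r j)%:~R * f j \is a Num.int.
  move=> Df; rewrite mulr_sumr; apply: rpred_sum => j _.
  by rewrite mulrCA rpredM ?intr_int ?Df.
apply/and3P; split.
- by apply: (Dcomb (fun j => (kpow p q u j).1.1)) => j /Dpow /and3P [].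
- by apply: (Dcomb (fun j => (kpow p q u j).1.2)) => j /Dpow /and3P [].
- by apply: (Dcomb (fun j => (kpow p q u j).2)) => j /Dpow /and3P [].
Qed.

Lemma knorm_alg_int u : alg_integer (kval u) -> knorm p q u \is a Num.int.
Proof.
move=> /kpow_den_bounded [D D_gt0 Dpow].
apply: (@int_of_bounded_den _ (D ^ 3)); first by rewrite expn_gt0 D_gt0.
by move=> k; rewrite natrX -knorm_pow -knorm_scale knorm_int_coords.
Qed.

Lemma knorm_unit u : 0 < 3 * t ^+ 2 - 4 * p%:~R -> 0 < kval u ->
  alg_integer (kval u) -> alg_integer (kval u)^-1 -> knorm p q u = 1.
Proof.
move=> disc_gt0 ku_gt0 ku_int kuV_int; have N_gt0 := knorm_gt0 disc_gt0 ku_gt0.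
apply: unit_int_gt0_eq1; rewrite ?knorm_alg_int // -knorm_kinv knorm_alg_int //.
by rewrite kval_kinv ?gt_eqF.
Qed.

End Embedding.

Section Estimate.
Variables (R : rcfType) (p : int) (t : R).
Local Notation A := (3 * t ^+ 2 - p%:~R).
Local Notation B := (3 * t ^+ 2 - 4 * p%:~R).
Local Notation C := (C1 p t).

Lemma deviation_sqr_le a b c :
  B * (A * ratr c - kval t (a, b, c)) ^+ 2 <= 4 * A * conjnorm p t (a, b, c).
Proof.
rewrite -subr_ge0 (_ : _ - _ = (3 * ratr a * t + 2 * ratr b * p%:~R
  - 3 * ratr b * t ^+ 2 + ratr c * p%:~R * t) ^+ 2) ?sqr_ge0 //.
by rewrite /kval /Kelt /=; field.
Qed.

Lemma sqrt2_le_C1 : Num.sqrt 2 <= C.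
Proof. by rewrite /C1 le_max lexx. Qed.

Lemma C1_gt0 : 0 < C.
Proof. by apply: lt_le_trans sqrt2_le_C1; rewrite sqrtr_gt0. Qed.

Lemma sqr_C1_ge2 : 2 <= C ^+ 2.
Proof.
by have := lerXn2r 2 (sqrtr_ge0 _) (ltW C1_gt0) sqrt2_le_C1; rewrite sqr_sqrtr.
Qed.

Lemma sqr_theta_le_C1 : 0 < B -> 2 * t ^+ 2 <= C ^+ 2 * B.
Proof.
move=> B_gt0; have sqrtB_gt0 : 0 < Num.sqrt B by rewrite sqrtr_gt0.
have : Num.sqrt 2 * `|t| / Num.sqrt B <= C by rewrite /C1 le_max lexx orbT.
have s2t_ge0 : 0 <= Num.sqrt 2 * `|t| by rewrite mulr_ge0 ?sqrtr_ge0 ?normr_ge0.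
rewrite ler_pdivrMr // => /(lerXn2r 2 s2t_ge0 (mulr_ge0 (ltW C1_gt0) (ltW sqrtB_gt0))).
by rewrite !exprMn !sqr_sqrtr ?real_normK ?num_real // ltW.
Qed.

Lemma deviation_bound a b c : 0 < B -> 0 < kval t (a, b, c) ->
  conjnorm p t (a, b, c) = (kval t (a, b, c))^-1 ->
  (A * ratr c - kval t (a, b, c)) ^+ 2 * kval t (a, b, c) <= 5 * C ^+ 2.
Proof.
move=> B_gt0 x_gt0 conjE; have [C2 tC] := (sqr_C1_ge2, sqr_theta_le_C1 B_gt0).
have := deviation_sqr_le a b c; rewrite conjE -(ler_pM2r x_gt0) mulfVK ?gt_eqF // -mulrA.
move=> devB.
have : 4 * A <= B * (5 * C ^+ 2).
  have : 2 * B <= C ^+ 2 * B by rewrite ler_pM2r.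
  lra.
by move=> /(le_trans devB); rewrite ler_pM2l.
Qed.

Lemma unit_pow_estimate a b c (L : R) : 0 < B -> 0 < L ->
  kval t (a, b, c) = L ^+ 2 -> conjnorm p t (a, b, c) = (L ^+ 2)^-1 ->
  2 * (1 + Num.sqrt 2) * C < L ^+ 3 ->
  0 < c /\ `|L - Num.sqrt A * Num.sqrt (ratr c)| < Num.sqrt 2 * C / L ^+ 2.
Proof.
move=> B_gt0 L_gt0 xE conjE CL.
have A_gt0 : 0 < A by have := sqr_ge0 t; lra.
have := @deviation_bound a b c B_gt0; rewrite xE => /(_ (exprn_gt0 2 L_gt0) conjE) dev.
set e := A * ratr c - L ^+ 2 in dev.
have e_small := deviation_lt_half L_gt0 (ltW C1_gt0) dev CL.
have AcE : A * ratr c = L ^+ 2 + e by rewrite /e; ring.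
have Ac_gt0 : 0 < A * ratr c.
  have := exprn_gt0 2 L_gt0; have := ler_norm (- e); rewrite normrN AcE; lra.
have c_gt0 : 0 < ratr c :> R by rewrite -(pmulr_rgt0 _ A_gt0).
split; first by rewrite -(ltr0q R).
apply: (sqrt_deviation (e := e)); rewrite ?mulr_ge0 ?sqrtr_ge0 ?C1_gt0 //.
by rewrite exprMn !sqr_sqrtr ?ltW.
Qed.

End Estimate.

Theorem mainTheorem10 (R : rcfType) (p q : int) (theta : R) (d : nat)
    (lambda : R) (n : nat) (a b c : rat) :
  irreducible_poly (cubic p q) ->
  theta ^+ 3 - p%:~R * theta - q%:~R = 0 ->
  (forall x : R, x ^+ 3 - p%:~R * x - q%:~R = 0 -> x = theta) ->
  (0 < d)%N ->
  (forall a' b' c' : rat, alg_integer (Kelt theta a' b' c') ->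
     exists u v w : int,
       Kelt theta a' b' c' = (u%:~R + v%:~R * theta + w%:~R * theta ^+ 2) / d%:R) ->
  (exists a0 b0 c0 : rat, lambda = Kelt theta a0 b0 c0) ->
  alg_integer lambda -> alg_integer (lambda^-1) ->
  1 < lambda ->
  (0 < n)%N ->
  Kelt theta a b c = lambda ^+ n ->
  Num.sqrt lambda ^+ (3 * n) > 2 * (1 + Num.sqrt 2) * C1 p theta ->
  0 < c /\
  `| Num.sqrt lambda ^+ n
     - Num.sqrt (3 * theta ^+ 2 - p%:~R) * Num.sqrt (ratr c) |
    < Num.sqrt 2 * C1 p theta / lambda ^+ n.
Proof.
move=> irr theta_root theta_uniq _ _ [a0 [b0 [c0 lambdaE]]] l_int lV_int l_gt1 _ powE big.
set u : coords := (a0, b0, c0).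
have kval_u : kval theta u = lambda by rewrite lambdaE.
have B_gt0 := disc_gt0 theta_root irr theta_uniq.
have norm_u : knorm p q u = 1.
  by apply: (knorm_unit theta_root irr); rewrite ?kval_u //; lra.
have pow_u : (a, b, c) = kpow p q u n.
  by apply: (kval_inj theta_root irr); rewrite kval_pow // kval_u.
have norm_abc : knorm p q (a, b, c) = 1 by rewrite pow_u knorm_pow norm_u expr1n.
have conjE : conjnorm p theta (a, b, c) = (lambda ^+ n)^-1.
  by rewrite (conjnorm_knorm1 theta_root norm_abc) [kval _ _]powE.
set L := Num.sqrt lambda ^+ n.
have L2 : L ^+ 2 = lambda ^+ n by rewrite -exprM mulnC exprM sqr_sqrtr //; lra.
rewrite -L2; apply: (unit_pow_estimate (a := a) (b := b)); rewrite ?L2 //.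
- by rewrite exprn_gt0 // sqrtr_gt0; lra.
- by rewrite /L -exprM mulnC.
Qed.
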